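(* Let $0<p\le n$. Let $\mathbf{X}$ be a deterministic $n\times p$ matrix with $\mathbf{X}^T\mathbf{X}=\mathbf{I}_p$, let $\boldsymbol\beta_0=(\beta_1,0,\dots,0)^T$ with $\beta_1\neq0$, let $\mathbf{y}=\mathbf{X}\boldsymbol\beta_0+\boldsymbol\varepsilon$ with $\varepsilon_i$ i.i.d. $N(0,\sigma^2)$, and $\mathbf z=\mathbf X^T\mathbf y$. For $\lambda\ge0$ let $$L_p(\lambda)=\frac1n\Big(\beta_1-\operatorname{sgn}(z_1)(|z_1|-\lambda)_+\Big)^2+\frac1n\sum_{j=2}^p\big((|z_j|-\lambda)_+\big)^2,$$ and $L_p(\lambda_p^* )=\min_{\lambda\ge0}L_p(\lambda)$. If $\operatorname{sgn}(\beta_1)\neq\operatorname{sgn}(z_1)$, then $nL_p(\lambda_p^* )=\beta_1^2$.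
   Context: $(a)_+=\max(a,0)$; $\operatorname{sgn}$ is the sign function. $L_p(\lambda)$ is the $L_2$ loss $\|\mathbf X\boldsymbol\beta_0-\mathbf X\hat{\boldsymbol\beta}_\lambda\|^2/n$ of the Lasso estimate $\hat\beta_{\lambda j}=\operatorname{sgn}(z_j)(|z_j|-\lambda)_+$ under the orthonormal design (for $p=1$ the sum is empty). *)

From mathcomp Require Import all_boot all_order all_algebra.
Set Implicit Arguments. Unset Strict Implicit. Unset Printing Implicit Defensive.
Import Order.TTheory GRing.Theory Num.Theory.
Local Open Scope ring_scope.

Definition pospart (R : realFieldType) (a : R) : R := Num.max a 0.

(* beta_0 = (beta_1, 0, ..., 0)^T  (index 0 is the paper's index 1) *)
Definition beta0 (R : realFieldType) (p : nat) (b1 : R) : 'cV[R]_p :=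
  \col_(j < p) (if (j : nat) == 0%N then b1 else 0).

Definition Lp (R : realFieldType) (n p : nat) (hp : (0 < p)%N) (b1 : R)
    (z : 'cV[R]_p) (lam : R) : R :=
  let z1 := z (Ordinal hp) 0 in
  n%:R^-1 * (b1 - Num.sg z1 * pospart (`|z1| - lam)) ^+ 2
  + n%:R^-1 * \sum_(j < p | (0 < (j : nat))%N) (pospart (`|z j 0| - lam)) ^+ 2.

(* Since sgn(z_1) disagrees with sgn(beta_1), the shrunken estimate of beta_1
   never points towards beta_1, so (beta_1 - sgn(z_1)(|z_1|-lambda)_+)^2 is at
   least beta_1^2 and n L_p(lambda) >= beta_1^2 for every lambda.  Once lambda
   exceeds every |z_j| all estimates vanish and n L_p(lambda) = beta_1^2, so the
   minimum is exactly beta_1^2.  The design X enters only through z: the bound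
   holds for every vector z. *)
From mathcomp Require Import all_boot all_order all_algebra.
Import Order.TTheory GRing.Theory Num.Theory.
From mathcomp Require Import lra.
Local Open Scope ring_scope.

Lemma pospart_ge0 (R : realFieldType) (a : R) : 0 <= pospart a.
Proof. by rewrite /pospart le_max lexx orbT. Qed.

Lemma pospart_eq0 (R : realFieldType) (a : R) : a <= 0 -> pospart a = 0.
Proof. by move=> a_le0; rewrite /pospart max_r. Qed.

Lemma sqr_le_subr_opposite (R : realDomainType) (b c : R) :
  b * c <= 0 -> b ^+ 2 <= (b - c) ^+ 2.
Proof. by move=> bc_le0; nra. Qed.

Lemma mulr_sg_neq_le0 (R : realDomainType) (b z : R) :
  Num.sg b != Num.sg z -> b * Num.sg z <= 0.
Proof.
case: (ltrgt0P b) => [b_gt0|b_lt0|->]; last by rewrite mul0r.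
- rewrite gtr0_sg //; case: (ltrgt0P z) => [z_gt0|z_lt0|->] sg_neq.
  + by rewrite gtr0_sg ?eqxx in sg_neq.
  + by rewrite ltr0_sg // mulrN1 oppr_le0 ltW.
  + by rewrite sgr0 mulr0.
- rewrite ltr0_sg //; case: (ltrgt0P z) => [z_gt0|z_lt0|->] sg_neq.
  + by rewrite gtr0_sg // mulr1 ltW.
  + by rewrite ltr0_sg ?eqxx in sg_neq.
  + by rewrite sgr0 mulr0.
Qed.

Section ScaledLoss.

Variables (R : realFieldType) (n p : nat) (hp : (0 < p)%N) (b1 : R) (z : 'cV[R]_p).
Hypothesis n_neq0 : n%:R != 0 :> R.

Let z1 := z (Ordinal hp) 0.

Lemma mulrn_Lp (lam : R) :
  n%:R * Lp n hp b1 z lam =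
  (b1 - Num.sg z1 * pospart (`|z1| - lam)) ^+ 2
  + \sum_(j < p | (0 < (j : nat))%N) pospart (`|z j 0| - lam) ^+ 2.
Proof. by rewrite /Lp mulrDr !mulrA mulfV // !mul1r. Qed.

Lemma mulrn_Lp_ge (lam : R) :
  Num.sg b1 != Num.sg z1 -> b1 ^+ 2 <= n%:R * Lp n hp b1 z lam.
Proof.
move=> sg_neq; rewrite mulrn_Lp -[b1 ^+ 2]addr0.
apply: lerD; last by apply: sumr_ge0 => j _; exact: sqr_ge0.
apply: sqr_le_subr_opposite.
by rewrite mulrA mulr_le0_ge0 ?mulr_sg_neq_le0 ?pospart_ge0.
Qed.

Lemma mulrn_Lp_large (lam : R) :
  (forall j, `|z j 0| <= lam) -> n%:R * Lp n hp b1 z lam = b1 ^+ 2.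
Proof.
move=> z_le_lam; have pos_eq0 j : pospart (`|z j 0| - lam) = 0.
  by rewrite pospart_eq0 // subr_le0.
rewrite mulrn_Lp pos_eq0 mulr0 subr0.
by rewrite big1 ?addr0 // => j _; rewrite pos_eq0 expr0n.
Qed.

End ScaledLoss.

Theorem lemma2p1 (R : realFieldType) (n p : nat) (hp : (0 < p)%N) (hpn : (p <= n)%N)
    (X : 'M[R]_(n, p)) (hX : X^T *m X = 1%:M) (b1 : R) (hb1 : b1 != 0)
    (eps : 'cV[R]_n) (lamstar : R) :
  let z := X^T *m (X *m beta0 p b1 + eps) in
  Num.sg b1 != Num.sg (z (Ordinal hp) 0) ->
  0 <= lamstar ->
  (forall lam : R, 0 <= lam -> Lp n hp b1 z lamstar <= Lp n hp b1 z lam) ->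
  n%:R * Lp n hp b1 z lamstar = b1 ^+ 2.
Proof.
move=> z sg_neq _ lamstar_min.
have n_gt0 : (0 < n)%N := leq_trans hp hpn.
have n_neq0 : n%:R != 0 :> R by rewrite pnatr_eq0 -lt0n.
pose lam_big := \sum_(j < p) `|z j 0|.
have z_le_big j : `|z j 0| <= lam_big.
  by rewrite /lam_big (bigD1 j) //= lerDl sumr_ge0.
apply: le_anti; rewrite mulrn_Lp_ge // andbT.
rewrite -(@mulrn_Lp_large _ _ _ hp b1 z n_neq0 _ z_le_big) ler_pM2l ?ltr0n //.
by apply: lamstar_min; rewrite sumr_ge0.
Qed.
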